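(* Let $\sim$ be a right congruence of finite index on $\Sigma^*$ with suffix expansion $\approx$. If $\sim$ has a critical tuple, then $|\Sigma^{\le n}/{\approx}|$ grows exponentially, and there exists a critical tuple $(u_2,v_2,u,v)$ in $\sim$ such that $u_2u\sim u_2wu$ and $v_2u\sim v_2wu$ for all $w\in\{u,v\}^*$.
   Context: Suffix expansion: $a_1\cdots a_n\approx b_1\cdots b_m$ iff $n=m$ and $a_i\cdots a_n\sim b_i\cdots b_n$ for all $i$. A critical tuple in a right congruence $\sim$ is $(u_2,v_2,u,v)$ with $|u_2|=|v_2|\ge1$, $u=u_1u_2$, $v=v_1v_2$ for some $u_1,v_1$, and $u_2w\not\sim v_2w$ for all $w\in\{u,v\}^*$. Exponential growth of $\gamma$: $\gamma(n)\ge c^n$ for some $c>1$ and infinitely many $n$. *)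

From HB Require Import structures.
From mathcomp Require Import all_boot all_order all_algebra.
From mathcomp Require Import reals.
Set Implicit Arguments. Unset Strict Implicit. Unset Printing Implicit Defensive.
Import Order.TTheory GRing.Theory Num.Theory.

Section Defs.
Variable Sigma : finType.
Implicit Types (sim : rel (seq Sigma)) (u v w : seq Sigma).

Definition right_congruence sim : Prop :=
  [/\ (forall u, sim u u),
      (forall u v, sim u v -> sim v u),
      (forall u v w, sim u v -> sim v w -> sim u w) &
      (forall u v w, sim u v -> sim (u ++ w) (v ++ w))].

Definition finite_index sim : Prop :=
  exists reps : seq (seq Sigma), forall w, exists2 r, r \in reps & sim w r.

(* suffix expansion: a_1..a_n ≈ b_1..b_m iff n = m and
   a_i..a_n ~ b_i..b_n for all i (i ranging over 1..n, i.e. drop (i-1)). *)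
Definition suffix_expansion sim : rel (seq Sigma) :=
  fun a b => (size a == size b) &&
             [forall i : 'I_(size a), sim (drop i a) (drop i b)].

Definition words_upto (n : nat) : seq (seq Sigma) :=
  flatten [seq [seq val t | t <- enum {: k.-tuple Sigma}] | k <- iota 0 n.+1].

(* |Sigma^{<=n} / r| : the number of r-classes among words of length <= n,
   each class being represented by its (finite) set of members. *)
Definition num_classes (r : rel (seq Sigma)) (n : nat) : nat :=
  let W := words_upto n in
  size (undup [seq [seq y <- W | r x y] | x <- W]).

Definition in_star2 u v w : Prop :=
  exists s : seq bool, w = flatten [seq if b then u else v | b <- s].

Definition critical_tuple sim (u2 v2 u v : seq Sigma) : Prop :=
  [/\ size u2 = size v2, (1 <= size u2)%N,
      (exists u1, u = u1 ++ u2), (exists v1, v = v1 ++ v2) &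
      (forall w, in_star2 u v w -> ~~ sim (u2 ++ w) (v2 ++ w))].

End Defs.

Definition exp_growth (R : realType) (gamma : nat -> nat) : Prop :=
  exists c : R, (1 < c)%R /\
    forall N : nat, exists n : nat, (N <= n)%N /\ (c ^+ n <= (gamma n)%:R)%R.

From HB Require Import structures.
From mathcomp Require Import all_boot all_order all_algebra.
From mathcomp Require Import reals.
From mathcomp Require Import lra zify.
From Stdlib Require Import Classical.
Set Implicit Arguments. Unset Strict Implicit. Unset Printing Implicit Defensive.
Import Order.TTheory GRing.Theory Num.Theory.

(* If (u2, v2, u1 u2, v1 v2) is critical, two distinct words over the blocks
   u = u1 u2 and v = v1 v2 are never suffix-equivalent: cutting both words
   inside the last block where they differ, just before its part u2 resp. v2,
   leaves suffixes u2 w and v2 w with w in {u, v}^*, which are not ~-related.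
   So the 2^N block words of N blocks lie in distinct classes.

   Right multiplication acts on the finitely many ~-classes, which makes the
   block words a finite transformation semigroup.  Let e be an idempotent of
   minimal rank among words ending in u (a power of a rank-minimal one) and
   f an idempotent power of e v.  As f starts with e, the word f e has the
   rank of e, hence the same kernel, and idempotence of f then gives f e = e.
   The tuple (u2, v2, e, f) is again critical, and e absorbs every product
   of e's and f's placed in front of it. *)

Lemma exists_argmin (A : Type) (f : A -> nat) (a : A) :
  exists a0, forall b, f a0 <= f b.
Proof.
suff ex_le n : (exists b, f b <= n) -> exists a0, forall b, f a0 <= f b.
  by apply: (ex_le (f a)); exists a.
elim: n => [|n IHn] [b fb]; first by exists b => c; apply: leq_trans fb _.
have [|none] := classic (exists c, f c <= n); first exact: IHn.
exists b => c; rewrite leqNgt; apply/negP => lt_cb.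
by apply: none; exists c; lia.
Qed.

Lemma iter_idempotent (T : finType) (f : T -> T) :
  exists2 m, 0 < m & idempotent_fun (iter m f).
Proof.
pose g (k : 'I_#|{ffun T -> T}|.+1) := [ffun x => iter k.+1 f x].
have /injectivePn [a [b neq_ab eq_ab]] : ~~ injectiveb g.
  by apply/injectiveP => /leq_card; rewrite card_ord ltnn.
wlog lt_ab : a b neq_ab eq_ab / a < b.
  move=> wlog_ab; have [lt_ab|lt_ba|a_eq_b] := ltngtP a b.
  - exact: (wlog_ab a b).
  - by apply: (wlog_ab b a); rewrite // eq_sym.
  - by rewrite (val_inj a_eq_b) eqxx in neq_ab.
set p := b - a; have p_gt0 : 0 < p by rewrite subn_gt0.
have periodic q x : iter (q * p + a.+1) f x = iter a.+1 f x.
  elim: q => // q IHq.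
  rewrite mulSn (addnC p) -addnA iterD (_ : p + a.+1 = b.+1); last by lia.
  by have /ffunP/(_ x) := eq_ab; rewrite !ffunE => <-; rewrite -iterD.
exists (a.+1 * p); first by rewrite muln_gt0 p_gt0.
have le_am : a.+1 <= a.+1 * p by rewrite leq_pmulr.
move=> x /=; rewrite -iterD.
have -> : a.+1 * p + a.+1 * p = (a.+1 * p - a.+1) + (a.+1 * p + a.+1) by lia.
by rewrite iterD periodic -iterD subnK.
Qed.

Lemma ker_eq_of_card_image (T U V : finType) (f : T -> U) (g : T -> V) :
  (forall x y, f x = f y -> g x = g y) ->
  #|[set f x | x : T]| <= #|[set g x | x : T]| ->
  forall x y, g x = g y -> f x = f y.
Proof.
move=> fg le_fg x y gxy.
pose phi a := g (odflt x [pick z | f z == a]).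
have phiE z : phi (f z) = g z.
  rewrite /phi; case: pickP => [z' /eqP /fg //|/(_ z)].
  by rewrite eqxx.
have img_g : [set g z | z : T] = phi @: [set f z | z : T].
  by rewrite -imset_comp; apply: eq_imset => z; rewrite /= phiE.
have /imset_injP phi_inj : #|phi @: [set f z | z : T]| == #|[set f z | z : T]|.
  by rewrite eqn_leq leq_imset_card -img_g.
by apply: phi_inj; rewrite ?imset_f ?phiE.
Qed.

Lemma idempotent_absorb (T : finType) (e f h : T -> T) :
  idempotent_fun f -> (forall x, f x = h (e x)) ->
  #|[set e x | x : T]| <= #|[set e (f x) | x : T]| ->
  forall x, e (f x) = e x.
Proof.
move=> f_idem fE le_e x.
have ker_e := ker_eq_of_card_image (g := e \o f) _ le_e.
apply: ker_e => [y z eyz|]; first by rewrite /= !fE eyz.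
by congr e; apply: f_idem.
Qed.

Section StarWords.
Variable A : Type.
Implicit Types (u v : seq A) (s t : seq bool).

Definition star_word u v s := flatten [seq if b then u else v | b <- s].

Lemma star_word_cons u v b s :
  star_word u v (b :: s) = (if b then u else v) ++ star_word u v s.
Proof. by []. Qed.

Lemma star_word_cat u v s t :
  star_word u v (s ++ t) = star_word u v s ++ star_word u v t.
Proof. by rewrite /star_word map_cat flatten_cat. Qed.

Lemma star_word_rcons u v s b :
  star_word u v (rcons s b) = star_word u v s ++ (if b then u else v).
Proof. by rewrite -cats1 star_word_cat /star_word /= cats0. Qed.

Lemma size_star_word u v s :
  size (star_word u v s) <= size s * maxn (size u) (size v).
Proof.
elim: s => // b s IHs; rewrite star_word_cons size_cat mulSn leq_add //.
by case: b; rewrite ?leq_maxl ?leq_maxr.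
Qed.

Lemma flatten_nseqSr m (s : seq A) :
  flatten (nseq m.+1 s) = flatten (nseq m s) ++ s.
Proof. by rewrite -addn1 nseqD flatten_cat /= cats0. Qed.

End StarWords.

Lemma star_word_comp (A : Type) (u v : seq A) (s t r : seq bool) :
  star_word (star_word u v s) (star_word u v t) r = star_word u v (star_word s t r).
Proof.
by elim: r => // b r IHr; rewrite !star_word_cons star_word_cat IHr; case: b.
Qed.

Lemma in_star2P (Sigma : finType) (u v w : seq Sigma) :
  in_star2 u v w <-> exists s, w = star_word u v s.
Proof. by []. Qed.

Section TransformationSemigroup.
Variable T : finType.
Variable act : seq bool -> T -> T.
Hypothesis act_cat : forall s t x, act (s ++ t) x = act t (act s x).

Let rank s := #|[set act s x | x : T]|.

Lemma rank_cat s t : rank (s ++ t) <= rank t.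
Proof.
apply/subset_leq_card/subsetP => _ /imsetP [x _ ->].
by rewrite act_cat imset_f.
Qed.

Lemma act_flatten_nseq m s x : act (flatten (nseq m.+1 s)) x = iter m.+1 (act s) x.
Proof.
elim: m x => [|m IHm] x; first by rewrite /= cats0.
by rewrite -[flatten _]/(s ++ flatten (nseq m.+1 s)) act_cat IHm -iterSr.
Qed.

Lemma exists_absorbing_pair : exists p q,
  forall s x, act (star_word (rcons p true) (rcons q false) s ++ rcons p true) x
              = act (rcons p true) x.
Proof.
have [s0 min_s0] := exists_argmin (fun s => rank (rcons s true)) [::].
have [[|m] // _ idem_m] := iter_idempotent (act (rcons s0 true)).
pose p := flatten (nseq m (rcons s0 true)) ++ s0.
have pE : flatten (nseq m.+1 (rcons s0 true)) = rcons p true.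
  by rewrite flatten_nseqSr rcons_cat.
have act_pp x : act (rcons p true ++ rcons p true) x = act (rcons p true) x.
  by rewrite act_cat -pE !act_flatten_nseq; apply: idem_m.
have min_p s : rank (rcons p true) <= rank (rcons s true).
  apply: leq_trans (min_s0 s); rewrite /p rcons_cat; exact: rank_cat.
have [[|m'] // _ idem_m'] := iter_idempotent (act (rcons (rcons p true) false)).
pose q := flatten (nseq m' (rcons (rcons p true) false)) ++ rcons p true.
have qE : flatten (nseq m'.+1 (rcons (rcons p true) false)) = rcons q false.
  by rewrite flatten_nseqSr /q rcons_cat.
pose r := false :: flatten (nseq m' (rcons (rcons p true) false)).
have qpr : rcons q false = rcons p true ++ r by rewrite -qE /= cat_rcons.
have act_qp x : act (rcons q false ++ rcons p true) x = act (rcons p true) x.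
  rewrite act_cat.
  apply: (idempotent_absorb (e := act (rcons p true)) (f := act (rcons q false))
                            (h := act r)).
  - by move=> y /=; rewrite -qE !act_flatten_nseq; apply: idem_m'.
  - by move=> y; rewrite qpr act_cat.
  - have := min_p (rcons q false ++ p).
    by rewrite rcons_cat /rank (eq_imset _ (act_cat _ _)).
exists p, q; elim=> [|b s IHs] x //.
rewrite star_word_cons -catA act_cat IHs -act_cat.
by case: b; [apply: act_pp | apply: act_qp].
Qed.

End TransformationSemigroup.

Section ClassAction.
Variables (Sigma : finType) (sim : rel (seq Sigma)) (reps : seq (seq Sigma)).
Hypothesis sim_rcong : right_congruence sim.
Hypothesis reps_cover : forall w, exists2 r, r \in reps & sim w r.

(* The extra index [size reps], returned by [find] on failure, never occurs by
   [reps_cover]; it keeps [cls] total without taking a proof argument. *)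
Definition cls w : 'I_(size reps).+1 := inord (find (sim w) reps).

Lemma cls_val w : cls w = find (sim w) reps :> nat.
Proof. by rewrite inordK // ltnS find_size. Qed.

Lemma sim_cls_rep w : sim w (nth [::] reps (cls w)).
Proof.
rewrite cls_val; apply: nth_find.
by have [r r_reps sim_wr] := reps_cover w; apply/hasP; exists r.
Qed.

Lemma eq_cls x y : (cls x == cls y) = sim x y.
Proof.
have [_ sim_sym sim_trans _] := sim_rcong.
apply/eqP/idP => [eq_xy | sim_xy].
  by apply: sim_trans (sim_cls_rep x) _; rewrite eq_xy; apply/sim_sym/sim_cls_rep.
apply: val_inj; rewrite /= !cls_val; apply: eq_find => z.
by apply/idP/idP; [apply: sim_trans (sim_sym _ _ sim_xy) | apply: sim_trans sim_xy].
Qed.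

Definition cls_act z (i : 'I_(size reps).+1) := cls (nth [::] reps i ++ z).

Lemma cls_cat x z : cls (x ++ z) = cls_act z (cls x).
Proof.
have [_ _ _ sim_catr] := sim_rcong.
by apply/eqP; rewrite eq_cls; apply/sim_catr/sim_cls_rep.
Qed.

Lemma cls_act_cat y z i : cls_act (y ++ z) i = cls_act z (cls_act y i).
Proof. by rewrite /cls_act catA cls_cat. Qed.

Lemma sim_catl_cls_act x y z : cls_act y =1 cls_act z -> sim (x ++ y) (x ++ z).
Proof. by move=> eq_yz; rewrite -eq_cls !cls_cat eq_yz. Qed.

End ClassAction.

Lemma critical_tuple_star_word (Sigma : finType) (sim : rel (seq Sigma))
    u2 v2 u v p q :
  critical_tuple sim u2 v2 u v ->
  critical_tuple sim u2 v2 (star_word u v (rcons p true)) (star_word u v (rcons q false)).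
Proof.
case=> size_uv2 size_u2 [u1 uE] [v1 vE] crit; split=> //.
- by exists (star_word u v p ++ u1); rewrite star_word_rcons uE catA.
- by exists (star_word u v q ++ v1); rewrite star_word_rcons vE catA.
- move=> _ /in_star2P [s ->]; rewrite star_word_comp.
  by apply: crit; apply/in_star2P; exists (star_word (rcons p true) (rcons q false) s).
Qed.

Lemma mem_words_upto (Sigma : finType) n (x : seq Sigma) :
  size x <= n -> x \in words_upto Sigma n.
Proof.
move=> size_x; apply/flattenP.
exists [seq val t | t <- enum {: (size x).-tuple Sigma}].
  by apply/mapP; exists (size x); rewrite // mem_iota.
by apply/mapP; exists (in_tuple x); rewrite ?mem_enum.
Qed.

Lemma card_le_num_classes (Sigma T : finType) (r : rel (seq Sigma)) n
    (f : T -> seq Sigma) :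
  (forall x, r x x) -> (forall a b, r (f a) (f b) -> a = b) ->
  (forall a, size (f a) <= n) -> #|T| <= num_classes r n.
Proof.
move=> r_refl f_sep size_f; rewrite /num_classes.
set W := words_upto Sigma n; pose cl x := [seq y <- W | r x y].
have cl_f a : f a \in cl (f a) by rewrite mem_filter r_refl mem_words_upto.
rewrite cardE -(size_map (cl \o f)); apply: uniq_leq_size.
  rewrite map_inj_uniq ?enum_uniq // => a b /= eq_ab.
  by apply: f_sep; move: (cl_f b); rewrite -eq_ab mem_filter => /andP [].
move=> _ /mapP [a _ ->]; rewrite mem_undup; apply: map_f.
exact: mem_words_upto.
Qed.

Section ExponentialGrowth.
Local Open Scope ring_scope.

Lemma expr_1Dinv_double_le2 (R : realFieldType) (M : nat) :
  (1 + (M.*2)%:R^-1) ^+ M <= 2 :> R.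
Proof.
have [->|M_gt0] := posnP M; first by rewrite expr0 ler1n.
set x : R := (M.*2)%:R^-1; have x_ge0 : 0 <= x by rewrite invr_ge0.
have bernoulli k : (1 + x) ^+ k * (1 - k%:R * x) <= 1.
  elim: k => [|k IHk]; first by rewrite expr0 mul0r subr0 mul1r.
  rewrite exprSr -mulrA; apply: le_trans IHk.
  rewrite ler_wpM2l ?exprn_ge0 ?addr_ge0 //.
  have k_ge0 : 0 <= k%:R :> R by [].
  rewrite -natr1; nra.
have Mx : 1 - M%:R * x = 2^-1.
  rewrite /x -muln2 natrM invfM mulrA mulfV ?mul1r ?pnatr_eq0 -?lt0n //; lra.
by have := bernoulli M; rewrite Mx ler_pdivrMr // mul1r.
Qed.

Lemma exp_growth_pow2 (R : realType) (gamma : nat -> nat) (M : nat) :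
  (0 < M)%N -> (forall N, 2 ^ N <= gamma (N * M))%N -> exp_growth R gamma.
Proof.
move=> M_gt0 gamma_ge; set c : R := 1 + (M.*2)%:R^-1.
have c_gt1 : 1 < c by rewrite ltrDl invr_gt0 ltr0n double_gt0.
exists c; split=> // N; exists (N * M)%N; split; first by rewrite leq_pmulr.
rewrite mulnC exprM; apply: (@le_trans _ _ (2 ^+ N)).
  rewrite lerXn2r ?nnegrE ?exprn_ge0 ?expr_1Dinv_double_le2 //.
  exact: le_trans (ltW c_gt1).
by rewrite -natrX ler_nat mulnC gamma_ge.
Qed.

End ExponentialGrowth.

Section CriticalSeparation.
Variables (Sigma : finType) (sim : rel (seq Sigma)).
Hypothesis sim_refl : forall x, sim x x.
Hypothesis sim_sym : forall x y, sim x y -> sim y x.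
Variables u1 u2 v1 v2 : seq Sigma.
Hypothesis size_uv2 : size u2 = size v2.
Hypothesis size_u2_gt0 : 0 < size u2.
Hypothesis critical : forall s,
  ~~ sim (u2 ++ star_word (u1 ++ u2) (v1 ++ v2) s)
         (v2 ++ star_word (u1 ++ u2) (v1 ++ v2) s).

Local Notation wd := (star_word (u1 ++ u2) (v1 ++ v2)).
Local Notation head1 b := (if b then u1 else v1).
Local Notation head2 b := (if b then u2 else v2).

Lemma star_word_rcons_cat s b r :
  wd (rcons s b ++ r) = (wd s ++ head1 b) ++ head2 b ++ wd r.
Proof. by rewrite star_word_cat star_word_rcons; case: b; rewrite !catA. Qed.

Lemma size_star_word_rcons s b :
  size (wd (rcons s b)) = size (wd s) + size (head1 b) + size u2.
Proof. by case: b; rewrite star_word_rcons !size_cat addnA -?size_uv2. Qed.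

Lemma star_word_size0nil s : size (wd s) = 0 -> s = [::].
Proof.
case/lastP: s => // s b; rewrite size_star_word_rcons => /eqP.
by rewrite addn_eq0 [size u2 == 0]eqn0Ngt size_u2_gt0 andbF.
Qed.

Lemma star_word_suffix_inj s t r : size (wd s) = size (wd t) ->
  (forall i, i < size (wd s) -> sim (drop i (wd (s ++ r))) (drop i (wd (t ++ r)))) ->
  s = t.
Proof.
elim/last_ind: s t r => [|s a IHs] t r.
  by move=> /esym/star_word_size0nil ->.
case/lastP: t => [/star_word_size0nil //|t c].
rewrite !size_star_word_rcons => /eqP; rewrite eqn_add2r => /eqP size_st sim_st.
have [eq_ac|neq_ac] := eqVneq a c.
  subst c; move: size_st => /eqP; rewrite eqn_add2r => /eqP /IHs eq_st.
  rewrite (eq_st (a :: r)) // => i lt_i; rewrite -!cat_rcons; apply: sim_st.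
  by rewrite -addnA ltn_addr.
have lt_cut : size (wd s) + size (head1 a) < size (wd s) + size (head1 a) + size u2.
  by rewrite -[X in X < _]addn0 ltn_add2l.
have := sim_st _ lt_cut.
rewrite !star_word_rcons_cat drop_size_cat ?size_cat //.
rewrite size_st drop_size_cat ?size_cat //.
case: a c neq_ac {size_st sim_st lt_cut} => [] [] // _ sim_r.
- by case/negP: (critical r).
- by case/negP: (critical r); apply: sim_sym.
Qed.

Lemma suffix_expansion_star_word_inj s t :
  suffix_expansion sim (wd s) (wd t) -> s = t.
Proof.
case/andP => /eqP size_st /forallP sim_st.
apply: (star_word_suffix_inj (r := [::])) => // i lt_i.
by rewrite !cats0; apply: (sim_st (Ordinal lt_i)).
Qed.

Lemma pow2_le_num_classes N :
  2 ^ N <= num_classes (suffix_expansion sim)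
             (N * maxn (size (u1 ++ u2)) (size (v1 ++ v2))).
Proof.
rewrite -[2]card_bool -card_tuple.
apply: (card_le_num_classes (f := fun t : N.-tuple bool => wd t)).
- by move=> x; rewrite /suffix_expansion eqxx; apply/forallP.
- by move=> a b /suffix_expansion_star_word_inj /val_inj.
- by move=> a; rewrite (leq_trans (size_star_word _ _ _)) ?size_tuple.
Qed.

End CriticalSeparation.

Lemma critical_tuple_exp_growth (Sigma : finType) (R : realType)
    (sim : rel (seq Sigma)) u2 v2 u v :
  (forall x, sim x x) -> (forall x y, sim x y -> sim y x) ->
  critical_tuple sim u2 v2 u v -> exp_growth R (num_classes (suffix_expansion sim)).
Proof.
move=> sim_refl sim_sym [size_uv2 size_u2 [u1 ->] [v1 ->] critical].
have critical_blocks s : ~~ sim (u2 ++ star_word (u1 ++ u2) (v1 ++ v2) s)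
                          (v2 ++ star_word (u1 ++ u2) (v1 ++ v2) s).
  by apply: critical; apply/in_star2P; exists s.
apply: (exp_growth_pow2 _ _
  (pow2_le_num_classes sim_refl sim_sym size_uv2 size_u2 critical_blocks)).
by rewrite leq_max size_cat (leq_trans size_u2) ?leq_addl.
Qed.

Theorem proposition15 (Sigma : finType) (R : realType) (sim : rel (seq Sigma)) :
  right_congruence sim -> finite_index sim ->
  (exists u2 v2 u v : seq Sigma, critical_tuple sim u2 v2 u v) ->
  exp_growth R (num_classes (suffix_expansion sim)) /\
  exists u2 v2 u v : seq Sigma, critical_tuple sim u2 v2 u v /\
    forall w, in_star2 u v w ->
      sim (u2 ++ u) (u2 ++ w ++ u) /\ sim (v2 ++ u) (v2 ++ w ++ u).
Proof.
move=> sim_rcong [reps reps_cover] [u2 [v2 [u [v crit]]]].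
have [sim_refl sim_sym _ _] := sim_rcong.
split; first exact: critical_tuple_exp_growth crit.
pose act s := @cls_act _ sim reps (star_word u v s).
have act_cat s t i : act (s ++ t) i = act t (act s i).
  by rewrite /act star_word_cat cls_act_cat.
have [p [q absorb]] := exists_absorbing_pair act_cat.
exists u2, v2, (star_word u v (rcons p true)), (star_word u v (rcons q false)).
split; first exact: critical_tuple_star_word.
move=> _ /in_star2P [s ->]; rewrite star_word_comp -star_word_cat.
by split; apply: sim_catl_cls_act => // i; exact: esym (absorb s i).
Qed.
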